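(* Let $k\ge 1$, let $j_1,\dots,j_h\le k$ be distinct positive integers and let $a_1,\dots,a_h$ be positive integers. Then \[ \mathbb{E}\, |\mathscr{L}(\mathbf{X}_k)|\, X_{j_1}^{a_1}\cdots X_{j_h}^{a_h} \le \frac{C_{a_1,\dots,a_h}}{j_1\cdots j_h}\,\mathbb{E}|\mathscr{L}(\mathbf{X}_k)|, \] where $C_{a_1,\dots,a_h} = \prod_{i=1}^h (B_{a_i}+B_{a_i+1})$ and $B_m$ denotes the $m$-th Bell number (so $B_1=1,B_2=2,B_3=5,\dots$). In particular one may take $C_1=3$.
   Context: Let $X_1,X_2,\dots$ be independent random variables with $X_j$ Poisson distributed with parameter $1/j$, and $\mathbf{X}_k=(X_1,\dots,X_k)$. For a finite list $\mathbf{c}=(c_1,\dots,c_k)$ of non-negative integers, $\mathscr{L}(\mathbf{c}) = \{m_1+2m_2+\cdots+km_k : 0\le m_j\le c_j \text{ for } j=1,\dots,k\}$, and $|\cdot|$ denotes cardinality. The $m$-th Bell number $B_m$ equals $\mathbb{E}X^m$ for $X$ Poisson with parameter $1$. *)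

From HB Require Import structures.
From mathcomp Require Import all_boot all_order all_algebra.
From mathcomp Require Import all_classical all_reals all_analysis.
Set Implicit Arguments. Unset Strict Implicit. Unset Printing Implicit Defensive.
Import Order.TTheory GRing.Theory Num.Theory.
Local Open Scope classical_set_scope.
Local Open Scope ring_scope.

Fixpoint bell_seq (n : nat) : seq nat :=
  match n with
  | 0 => [:: 1%N]
  | n'.+1 => let s := bell_seq n' in
             rcons s (\sum_(i < n'.+1) 'C(n', i) * nth 0%N s i)%N
  end.
Definition bell (n : nat) : nat := nth 0%N (bell_seq n) n.

(* A list c = (c_1,...,c_k) is encoded as c : {ffun 'I_k -> nat}, with
   c i standing for c_{i+1}.
   Every element of L(c) is <= sum_j j c_j, and each m_j <= c_j <= sum c,
   so the bounded finite types below lose nothing. *)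
Definition Lset (k : nat) (c : {ffun 'I_k -> nat}) :
    {set 'I_(\sum_(i < k) i.+1 * c i)%N.+1} :=
  [set n : 'I_(\sum_(i < k) i.+1 * c i)%N.+1 |
     [exists m : {ffun 'I_k -> 'I_(\sum_(i < k) c i)%N.+1},
        [forall i, (m i <= c i)%N] &&
        (val n == \sum_(i < k) i.+1 * m i)%N]].

Definition Lcard (k : nat) (c : {ffun 'I_k -> nat}) : nat := #|Lset c|.

Definition Epois {R : realType} (k : nat) (f : {ffun 'I_k -> nat} -> R) : \bar R :=
  \esum_(m in [set: {ffun 'I_k -> nat}])
     ((f m)%:E * (\prod_(i < k) poisson_pmf ((i.+1)%:R^-1 : R) (m i))%:E)%E.

From HB Require Import structures.
From mathcomp Require Import all_boot all_order all_algebra.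
From mathcomp Require Import all_classical all_reals all_analysis.
From mathcomp Require Import ring.
Import Order.TTheory GRing.Theory Num.Theory.
Set Implicit Arguments. Unset Strict Implicit. Unset Printing Implicit Defensive.

(* Resample the coordinate X_j: by independence,
   E[|L(X)| X_j^a G(X)] = E[G(X) sum_n P(X_j = n) n^a |L(X with X_j := n)|]
   when G does not depend on X_j.  Raising c_j to n multiplies |L(c)| by at
   most n + 1, since every element of the new set is t j + y with t <= n and
   y in L(c with c_j := 0), a subset of L(c).  Hence the inner sum is at most
   E[(N + 1) N^a] |L(X)| for N ~ Poisson(1/j), and the Touchard recursion
   E N^(a+1) = r sum_i C(a,i) E N^i shows E N^i <= B_i when r <= 1, so
   E[(N + 1) N^a] = E N^(a+1) + E N^a <= (B_(a+1) + B_a) / j.  Induct over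
   the h distinct coordinates. *)

Section SubsetSums.
Variable k : nat.
Implicit Types (c m : {ffun 'I_k -> nat}) (j : 'I_k).

Definition ffun_upd c j n : {ffun 'I_k -> nat} :=
  [ffun i => if i == j then n else c i].

Lemma ffun_upd_at c j n : ffun_upd c j n j = n.
Proof. by rewrite ffunE eqxx. Qed.

Lemma ffun_upd_upd c j n n' : ffun_upd (ffun_upd c j n) j n' = ffun_upd c j n'.
Proof. by apply/ffunP => i; rewrite !ffunE; case: (i == j). Qed.

Lemma ffun_upd_id c j : ffun_upd c j (c j) = c.
Proof. by apply/ffunP => i; rewrite !ffunE; case: eqP => // ->. Qed.

Lemma ffun_upd0_le c j i : (ffun_upd c j 0 i <= c i)%N.
Proof. by rewrite ffunE; case: (i == j). Qed.

Definition wsum m := (\sum_(i < k) i.+1 * m i)%N.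

Lemma leq_wsum c c' : (forall i, c i <= c' i)%N -> (wsum c <= wsum c')%N.
Proof. by move=> le_cc'; apply: leq_sum => i _; rewrite leq_mul2l le_cc' orbT. Qed.

Lemma wsum_upd0 m j : wsum m = (j.+1 * m j + wsum (ffun_upd m j 0))%N.
Proof.
rewrite /wsum [in RHS](bigD1 j) //= ffun_upd_at muln0 add0n (bigD1 j) //=.
by congr (_ + _)%N; apply: eq_bigr => i /negPf ne_ij; rewrite ffunE ne_ij.
Qed.

(* L(c) viewed inside the fixed range 'I_N.+1, so that L(c) and L(c') can be
   compared in one type. *)
Definition Lset_in N c : {set 'I_N.+1} :=
  [set x : 'I_N.+1 | `[< exists m, (forall i, m i <= c i)%N /\ val x = wsum m >]].

Lemma Lcard_Lset_in N c : (wsum c <= N)%N -> Lcard c = #|Lset_in N c|.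
Proof.
move=> le_cN; have le_cN1 : ((wsum c).+1 <= N.+1)%N by [].
have widen_inj : injective (widen_ord le_cN1).
  by move=> x y /(congr1 val) /= /val_inj.
rewrite /Lcard -(card_imset _ widen_inj); congr #|pred_of_set _|.
apply/setP => x; rewrite inE; apply/imsetP/asboolP.
- case=> y; rewrite inE => /existsP[m /andP[/forallP le_mc /eqP yE]] ->.
  exists [ffun i => val (m i)]; split=> [i|]; first by rewrite ffunE le_mc.
  by rewrite /= yE; apply: eq_bigr => i _; rewrite ffunE.
- case=> m [le_mc xE].
  have x_lt : (val x < (wsum c).+1)%N by rewrite ltnS xE leq_wsum.
  exists (Ordinal x_lt); last exact: val_inj.
  have m_lt i : (m i < (\sum_(i0 < k) c i0).+1)%N.
    by rewrite ltnS (leq_trans (le_mc i)) // (bigD1 i) //= leq_addr.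
  rewrite inE; apply/existsP; exists [ffun i => Ordinal (m_lt i)].
  apply/andP; split; first by apply/forallP => i; rewrite ffunE le_mc.
  by rewrite /= xE; apply/eqP; apply: eq_bigr => i _; rewrite ffunE.
Qed.

Lemma Lset_in_mono N c c' :
  (forall i, c i <= c' i)%N -> Lset_in N c \subset Lset_in N c'.
Proof.
move=> le_cc'; apply/fintype.subsetP => x; rewrite !inE => -[m [le_mc xE]].
by exists m; split=> // i; exact: leq_trans (le_mc i) (le_cc' i).
Qed.

Lemma card_Lset_in_upd N c j n :
  (#|Lset_in N (ffun_upd c j n)| <= n.+1 * #|Lset_in N (ffun_upd c j 0)|)%N.
Proof.
pose g (p : 'I_n.+1 * 'I_N.+1) : 'I_N.+1 := inord (p.1 * j.+1 + p.2).
rewrite -[n.+1]card_ord -cardsT -cardsX.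
apply: leq_trans (leq_imset_card g _); apply: subset_leq_card.
apply/fintype.subsetP => x; rewrite inE => /asboolP[m [le_mc xE]].
have mj_lt : (m j < n.+1)%N by have := le_mc j; rewrite ffun_upd_at.
have x_split : val x = (m j * j.+1 + wsum (ffun_upd m j 0))%N.
  by rewrite xE (wsum_upd0 _ j) mulnC.
have y_lt : (wsum (ffun_upd m j 0) < N.+1)%N.
  by rewrite (leq_ltn_trans _ (ltn_ord x)) // x_split leq_addl.
apply/imsetP; exists (Ordinal mj_lt, Ordinal y_lt).
  rewrite !inE /=; exists (ffun_upd m j 0); split=> // i.
  by have := le_mc i; rewrite !ffunE; case: (i == j).
by apply: val_inj; rewrite /g /= inordK -x_split // ltn_ord.
Qed.

Lemma Lcard_upd c j n : (Lcard (ffun_upd c j n) <= n.+1 * Lcard c)%N.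
Proof.
set N := (wsum (ffun_upd c j n) + wsum c)%N.
rewrite (@Lcard_Lset_in N) ?leq_addr // (@Lcard_Lset_in N c) ?leq_addl //.
apply: leq_trans (card_Lset_in_upd _ _ _ _) _; rewrite leq_mul2l.
by apply/orP; right; apply/subset_leq_card/Lset_in_mono/ffun_upd0_le.
Qed.

End SubsetSums.

Local Open Scope classical_set_scope.
Local Open Scope ring_scope.
Local Open Scope ereal_scope.

Section NonnegSums.
Variable R : realType.

Lemma esumZl (T : choiceType) (I : set T) (c : R) (f : T -> \bar R) :
  (0 <= c)%R -> (forall i, 0 <= f i) ->
  \esum_(i in I) (c%:E * f i) = c%:E * \esum_(i in I) f i.
Proof.
move=> c_ge0 f_ge0; rewrite /esum -ereal_supZl //; last first.
  by apply/set0P; exists 0; exists set0; [exact: fsets_set0 | rewrite fsbig_set0].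
congr ereal_sup; rewrite image_comp; apply: eq_imagel => A [finA AI] /=.
by rewrite !fsbig_finite // ge0_sume_distrr.
Qed.

Lemma esum_nat_shift (f : nat -> \bar R) : (forall n, 0 <= f n) -> f 0%N = 0 ->
  \esum_(n in [set: nat]) f n = \esum_(n in [set: nat]) f n.+1.
Proof.
move=> f_ge0 f0; rewrite (esumID [set 0%N]) // setTI esum_set1 ?f0 // add0e.
rewrite -(esum_image setT succn); last by move=> x y _ _ [].
congr esum; apply/seteqP; split=> [n [_ /= n_neq0]|_ [m _ <-] //].
by exists n.-1 => //; case: n n_neq0.
Qed.

End NonnegSums.

Lemma size_bell_seq n : size (bell_seq n) = n.+1.
Proof. by elim: n => //= n IH; rewrite size_rcons IH. Qed.

Lemma nth_bell_seq n i : (i <= n)%N -> nth 0%N (bell_seq n) i = bell i.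
Proof.
elim: n i => [|n IH] i; first by rewrite leqn0 => /eqP ->.
rewrite leq_eqVlt => /orP[/eqP -> // | lt_in].
by rewrite /= nth_rcons size_bell_seq lt_in IH.
Qed.

Lemma bellS a : bell a.+1 = (\sum_(i < a.+1) 'C(a, i) * bell i)%N.
Proof.
rewrite {1}/bell /= nth_rcons size_bell_seq ltnn eqxx.
by apply: eq_bigr => i _; rewrite nth_bell_seq // -ltnS.
Qed.

Section PoissonMoments.
Variables (R : realType) (r : R).
Hypothesis r_gt0 : (0 < r)%R.

Lemma poisson_pmf_sum1 : \esum_(n in [set: nat]) (poisson_pmf r n)%:E = 1.
Proof.
have : poisson_prob r 0%N [set: nat] = 1 by exact: probability_setT.
by rewrite /poisson_prob r_gt0.
Qed.

Lemma poisson_pmfS n : (poisson_pmf r n.+1 * n.+1%:R = r * poisson_pmf r n)%R.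
Proof.
rewrite /poisson_pmf r_gt0 factS natrM invfM exprS.
have n1_neq0 : (n.+1%:R : R) != 0%R by rewrite pnatr_eq0.
have fact_neq0 : (n`!%:R : R) != 0%R by rewrite pnatr_eq0 -lt0n fact_gt0.
by field; rewrite fact_neq0 addrC natr1 pnatr_eq0.
Qed.

Definition poisson_moment a :=
  \esum_(n in [set: nat]) (poisson_pmf r n * n%:R ^+ a)%:E.

Lemma poisson_moment0 : poisson_moment 0 = 1.
Proof.
by rewrite -poisson_pmf_sum1; apply: eq_esum => n _; rewrite expr0 mulr1.
Qed.

(* Touchard's recursion: shift n to n + 1 with n P(N = n) = r P(N = n - 1),
   then expand (n + 1)^a binomially. *)
Lemma poisson_momentS a : poisson_moment a.+1 =
  r%:E * \sum_(i < a.+1) ('C(a, i))%:R%:E * poisson_moment i.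
Proof.
have pmf_ge0 n i : 0 <= (poisson_pmf r n * n%:R ^+ i)%:E.
  by rewrite lee_fin mulr_ge0 ?poisson_pmf_ge0 ?exprn_ge0.
rewrite /poisson_moment esum_nat_shift //; last by rewrite expr0n /= mulr0.
under eq_esum => n _.
  rewrite exprS mulrA poisson_pmfS -mulrA -{1}(addn1 n) natrD exprD1n.
  rewrite mulr_sumr EFinM -sumEFin.
  over.
rewrite esumZl ?(ltW r_gt0) //; last first.
  move=> n; apply: sume_ge0 => i _.
  by rewrite lee_fin mulr_ge0 ?poisson_pmf_ge0 ?mulrn_wge0 ?exprn_ge0.
congr (_ * _); rewrite esum_sum; last first.
  by move=> n i _ _; rewrite lee_fin mulr_ge0 ?poisson_pmf_ge0 ?mulrn_wge0 ?exprn_ge0.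
apply: eq_bigr => i _; rewrite -esumZl //.
by apply: eq_esum => n _; rewrite -EFinM mulrnAr -mulr_natl.
Qed.

Lemma poisson_momentS_le a :
  (forall i, (i <= a)%N -> poisson_moment i <= (bell i)%:R%:E) ->
  poisson_moment a.+1 <= (r * (bell a.+1)%:R)%:E.
Proof.
move=> le_bell; rewrite poisson_momentS bellS natr_sum EFinM.
apply: lee_wpmul2l; first by rewrite lee_fin ltW.
rewrite -sumEFin; apply: lee_sum => i _; rewrite natrM EFinM.
by apply: lee_wpmul2l; [rewrite lee_fin ler0n | apply: le_bell; rewrite -ltnS].
Qed.

Hypothesis r_le1 : (r <= 1)%R.

Lemma poisson_moment_le_bell a : poisson_moment a <= (bell a)%:R%:E.
Proof.
suff le_bell i : (i <= a)%N -> poisson_moment i <= (bell i)%:R%:E by exact: le_bell.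
elim: a i => [|a IH] i; first by rewrite leqn0 => /eqP ->; rewrite poisson_moment0.
rewrite leq_eqVlt => /orP[/eqP -> | /IH //].
by apply: le_trans (poisson_momentS_le IH) _; rewrite lee_fin ler_piMl.
Qed.

Lemma poisson_shifted_moment_le a : (0 < a)%N ->
  \esum_(n in [set: nat]) (poisson_pmf r n * (n.+1%:R * n%:R ^+ a))%:E <=
  (r * ((bell a)%:R + (bell a.+1)%:R))%:E.
Proof.
case: a => // a _.
under eq_esum => n _ do rewrite -natr1 mulrDl mul1r -exprS mulrDr EFinD.
rewrite esumD => [|n _|n _]; last 2 first.
- by rewrite lee_fin mulr_ge0 ?poisson_pmf_ge0 ?exprn_ge0.
- by rewrite lee_fin mulr_ge0 ?poisson_pmf_ge0 ?exprn_ge0.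
rewrite mulrDr EFinD addeC.
by apply: leeD; apply: poisson_momentS_le => i _; apply: poisson_moment_le_bell.
Qed.

End PoissonMoments.

Section Resampling.
Variables (R : realType) (k : nat) (p : 'I_k -> nat -> R).
Hypothesis p_ge0 : forall i n, (0 <= p i n)%R.
Hypothesis p_sum1 : forall i, \esum_(n in [set: nat]) (p i n)%:E = 1.
Local Notation T := {ffun 'I_k -> nat}.

Definition prod_pmf (m : T) : R := \prod_(i < k) p i (m i).

Lemma prod_pmf_ge0 m : (0 <= prod_pmf m)%R.
Proof. by apply: prodr_ge0 => i _; apply: p_ge0. Qed.

Lemma prod_pmf_upd m j n :
  (prod_pmf (ffun_upd m j n) * p j (m j) = prod_pmf m * p j n)%R.
Proof.
rewrite /prod_pmf (bigD1 j) //= [in RHS](bigD1 j) //= ffun_upd_at.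
under eq_bigr => i /negPf ne_ij do rewrite ffunE ne_ij.
by ring.
Qed.

(* The involution (m, n) |-> (m with m_j := n, m_j) of T * nat preserves
   prod_pmf m * p j n, which is what trades X_j for an independent copy. *)
Lemma esum_resample j (F : T -> nat -> R) : (forall m n, 0 <= F m n)%R ->
  \esum_(m in [set: T]) ((F m (m j))%:E * (prod_pmf m)%:E) =
  \esum_(m in [set: T]) ((prod_pmf m)%:E *
     \esum_(n in [set: nat]) (p j n * F (ffun_upd m j n) n)%:E).
Proof.
move=> F_ge0; set TN := [set: T] `*`` (fun=> [set: nat]).
have summand_ge0 m n : 0 <= (F (ffun_upd m j n) n * prod_pmf m * p j n)%:E.
  by rewrite lee_fin !mulr_ge0 ?prod_pmf_ge0.
have split_m m : (F m (m j))%:E * (prod_pmf m)%:E =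
    \esum_(n in [set: nat]) (F m (m j) * prod_pmf m * p j n)%:E.
  under eq_esum => n _ do rewrite EFinM.
  rewrite esumZl ?p_sum1 ?mule1 ?EFinM // => [|n]; last by rewrite lee_fin.
  by rewrite mulr_ge0 ?prod_pmf_ge0.
under eq_esum => m _ do rewrite split_m.
rewrite esum_esum; last by move=> m n _ _; rewrite lee_fin !mulr_ge0 ?prod_pmf_ge0.
pose swap z : T * nat := (ffun_upd z.1 j z.2, z.1 j).
have swapK : involutive swap.
  by case=> m n; rewrite /swap /= ffun_upd_upd ffun_upd_at ffun_upd_id.
rewrite (reindex_esum TN TN swap); last first.
  by split=> // [x y _ _ /(can_inj swapK)|y _] //; exists (swap y); rewrite ?swapK.
transitivity (\esum_(z in TN) (F (ffun_upd z.1 j z.2) z.2 * prod_pmf z.1 * p j z.2)%:E).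
  apply: eq_esum => -[m n] _; rewrite /swap /= ffun_upd_at.
  by rewrite -mulrA prod_pmf_upd mulrA.
rewrite -(esum_esum (a := fun m n => (F (ffun_upd m j n) n * prod_pmf m * p j n)%:E));
  last by move=> m n _ _; exact: summand_ge0.
apply: eq_esum => m _; rewrite -esumZl ?prod_pmf_ge0 //; last first.
  by move=> n; rewrite lee_fin mulr_ge0.
by apply: eq_esum => n _; rewrite -EFinM; congr (_%:E); ring.
Qed.

End Resampling.

Section LcardMoments.
Variables (R : realType) (k h : nat) (j : 'I_h -> 'I_k) (a : 'I_h -> nat).
Hypothesis j_inj : injective j.
Hypothesis a_gt0 : forall i, (0 < a i)%N.
Local Notation T := {ffun 'I_k -> nat}.
Local Notation pmf i := (poisson_pmf ((i : 'I_k).+1%:R^-1 : R)).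

Lemma Epois_prod_pmfE (f : T -> R) :
  Epois f = \esum_(m in [set: T]) ((f m)%:E * (prod_pmf (fun i => pmf i) m)%:E).
Proof. by []. Qed.

Definition mom_prod (S : seq 'I_h) (m : T) : R := \prod_(i <- S) (m (j i))%:R ^+ a i.

Definition bell_const (i : 'I_h) : R :=
  (j i).+1%:R^-1 * ((bell (a i))%:R + (bell (a i).+1)%:R).

Lemma bell_const_ge0 i : (0 <= bell_const i)%R.
Proof. by rewrite mulr_ge0. Qed.

Lemma mom_prod_ge0 S m : (0 <= mom_prod S m)%R.
Proof. by apply: prodr_ge0 => i _; rewrite exprn_ge0. Qed.

Lemma mom_prod_upd S m i0 n : i0 \notin S -> mom_prod S (ffun_upd m (j i0) n) = mom_prod S m.
Proof.
move=> i0_notin; rewrite /mom_prod !big_seq; apply: eq_bigr => i iS.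
by rewrite ffunE (inj_eq j_inj); case: eqP iS i0_notin => // -> ->.
Qed.

Lemma resampled_Lcard_le S m i0 : i0 \notin S ->
  \esum_(n in [set: nat])
     (pmf (j i0) n * ((Lcard (ffun_upd m (j i0) n))%:R * mom_prod S m * n%:R ^+ a i0))%:E
  <= ((Lcard m)%:R * mom_prod S m * bell_const i0)%:E.
Proof.
move=> i0_notin; set L := ((Lcard m)%:R * mom_prod S m)%R.
have L_ge0 : (0 <= L)%R by rewrite mulr_ge0 ?mom_prod_ge0.
apply: (@le_trans _ _ (\esum_(n in [set: nat])
    (L%:E * (pmf (j i0) n * (n.+1%:R * n%:R ^+ a i0))%:E))).
  apply: le_esum => n _; rewrite -EFinM lee_fin.
  have Lcard_le : ((Lcard (ffun_upd m (j i0) n))%:R <= n.+1%:R * (Lcard m)%:R :> R)%R.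
    by rewrite -natrM ler_nat Lcard_upd.
  set c := (pmf (j i0) n * mom_prod S m * n%:R ^+ a i0)%R.
  have c_ge0 : (0 <= c)%R by rewrite !mulr_ge0 ?poisson_pmf_ge0 ?mom_prod_ge0 ?exprn_ge0.
  have -> : (pmf (j i0) n * ((Lcard (ffun_upd m (j i0) n))%:R * mom_prod S m * n%:R ^+ a i0)
    = c * (Lcard (ffun_upd m (j i0) n))%:R)%R by rewrite /c; ring.
  have -> : (L * (pmf (j i0) n * (n.+1%:R * n%:R ^+ a i0))
    = c * (n.+1%:R * (Lcard m)%:R))%R by rewrite /c /L; ring.
  exact: ler_wpM2l.
rewrite esumZl // => [|n]; last by rewrite lee_fin !mulr_ge0 ?poisson_pmf_ge0 ?exprn_ge0.
rewrite (EFinM L); apply: lee_wpmul2l; first by rewrite lee_fin.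
by apply: poisson_shifted_moment_le; rewrite ?invr_gt0 ?invf_le1 ?ltr0n ?ler1n.
Qed.

Lemma Epois_mom_prod_cons S i0 : i0 \notin S ->
  Epois (fun m => (Lcard m)%:R * mom_prod (i0 :: S) m)%R <=
  (bell_const i0)%:E * Epois (fun m => (Lcard m)%:R * mom_prod S m)%R.
Proof.
move=> i0_notin; rewrite !Epois_prod_pmfE.
pose F m n := ((Lcard m)%:R * mom_prod S m * n%:R ^+ a i0)%R.
have F_ge0 m n : (0 <= F m n)%R by rewrite !mulr_ge0 ?mom_prod_ge0 ?exprn_ge0.
have pmf_ge0 i n : (0 <= pmf i n)%R by exact: poisson_pmf_ge0.
have pmf_sum1 i : \esum_(n in [set: nat]) (pmf i n)%:E = 1.
  by apply: poisson_pmf_sum1; rewrite invr_gt0.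
set pp := prod_pmf _.
have -> : \esum_(m in [set: T]) (((Lcard m)%:R * mom_prod (i0 :: S) m)%:E * (pp m)%:E)
    = \esum_(m in [set: T]) ((F m (m (j i0)))%:E * (pp m)%:E).
  by apply: eq_esum => m _; rewrite /F /mom_prod big_cons; congr (_%:E * _); ring.
rewrite (esum_resample pmf_ge0 pmf_sum1 (j i0) F_ge0) -esumZl; last 2 first.
- exact: bell_const_ge0.
- by move=> m; rewrite -!EFinM lee_fin /pp !mulr_ge0 ?mom_prod_ge0 ?prod_pmf_ge0.
apply: le_esum => m _.
have -> : (bell_const i0)%:E * (((Lcard m)%:R * mom_prod S m)%:E * (pp m)%:E)
    = (pp m)%:E * ((Lcard m)%:R * mom_prod S m * bell_const i0)%:E.
  by rewrite -!EFinM; congr EFin; ring.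
apply: lee_wpmul2l; first by rewrite lee_fin prod_pmf_ge0.
under eq_esum => n _ do rewrite /F mom_prod_upd //.
exact: resampled_Lcard_le.
Qed.

Lemma Epois_mom_prod_le S : uniq S ->
  Epois (fun m => (Lcard m)%:R * mom_prod S m)%R <=
  (\prod_(i <- S) bell_const i)%:E * Epois (fun m : T => (Lcard m)%:R)%R.
Proof.
elim: S => [|i0 S IH] /=.
  by rewrite big_nil mul1e /mom_prod; under eq_fun do rewrite big_nil mulr1.
case/andP=> i0_notin /IH le_S; apply: le_trans (Epois_mom_prod_cons i0_notin) _.
rewrite big_cons (EFinM (bell_const i0)) -muleA.
by apply: lee_wpmul2l; rewrite ?lee_fin ?bell_const_ge0.
Qed.

End LcardMoments.

Local Close Scope ereal_scope.
Local Close Scope classical_set_scope.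

Theorem lemma3p3 (R : realType) (k h : nat) (j : 'I_h -> 'I_k)
    (a : 'I_h -> nat) :
  (1 <= k)%N -> injective j -> (forall i, (0 < a i)%N) ->
  (Epois (fun X : {ffun 'I_k -> nat} =>
            ((Lcard X)%:R * \prod_(i < h) ((X (j i))%:R ^+ a i) : R)%R)
   <= ((\prod_(i < h) (bell (a i) + bell (a i).+1)%:R
          / \prod_(i < h) ((j i).+1)%:R : R)%R%:E
       * Epois (fun X : {ffun 'I_k -> nat} => ((Lcard X)%:R : R)%R)))%E.
Proof.
move=> _ j_inj a_gt0.
have mom_prodE : mom_prod R j a (enum 'I_h) =
    fun X => \prod_(i < h) ((X (j i))%:R ^+ a i).
  by apply: funext => X; rewrite /mom_prod big_enum.
have bell_constE : \prod_(i <- enum 'I_h) bell_const R j a i =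
    \prod_(i < h) (bell (a i) + bell (a i).+1)%:R / \prod_(i < h) ((j i).+1)%:R.
  rewrite big_enum /= big_split /= mulrC -prodfV.
  by congr (_ * _); apply: eq_bigr => i _; rewrite natrD.
by have := Epois_mom_prod_le R j_inj a_gt0 (enum_uniq 'I_h); rewrite mom_prodE bell_constE.
Qed.
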